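(* For any digraph $G$ and any field $\mathbb F$, $\rho(G)=h_1^{\rm twist}(\underline{\mathbb F})$, where $\underline{\mathbb F}$ is the structure sheaf of $G$.
   Context: A digraph $G$ has finite vertex set $V_G$, edge set $E_G$, and tail/head maps $t_G,h_G\colon E_G\to V_G$ (multiple edges and loops allowed). The structure sheaf $\underline{\mathbb F}$ assigns $\mathbb F$ to every vertex and edge, with all restriction maps the identity. For a sheaf $\mathcal F$ (values $\mathcal F(P)$, restriction maps $\mathcal F(t,e)\colon\mathcal F(e)\to\mathcal F(t_Ge)$, $\mathcal F(h,e)\colon\mathcal F(e)\to\mathcal F(h_Ge)$), let $\psi(e)$, $e\in E_G$, be independent indeterminates and $\mathcal F^\psi$ the sheaf of $\mathbb F(\psi)$-spaces with values $\mathcal F(P)\otimes\mathbb F(\psi)$, head maps $\mathcal F(h,e)$, tail maps $\psi(e)\mathcal F(t,e)$; $h_1^{\rm twist}(\mathcal F)$ is the $\mathbb F(\psi)$-dimension of the kernel of $d=d_h-d_t\colon\bigoplus_e\mathcal F^\psi(e)\to\bigoplus_v\mathcal F^\psi(v)$, where $d_h$ (resp. $d_t$) sends the summand of $e$ to that of $h_Ge$ (resp. $t_Ge$) via the head (resp. tail) map. Regarding $G$ as undirected, for a connected component $X$ let $h_1(X)=|E_X|-|V_X|+1$, and $\rho(G)=\sum_X\max(0,h_1(X)-1)$ over connected components. *)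

From HB Require Import structures.
From mathcomp Require Import all_boot all_order all_algebra.
Set Implicit Arguments. Unset Strict Implicit. Unset Printing Implicit Defensive.
Import Order.TTheory GRing.Theory Num.Theory.
Local Open Scope ring_scope.

(* Rational function field F(x_0, ..., x_{n-1}), built as iterated
   fraction fields: F(x_0..x_{n-1}) = Frac( F(x_0..x_{n-2})[x_{n-1}] ). *)
Fixpoint ratfun (F : fieldType) (n : nat) : fieldType :=
  match n with
  | 0 => F
  | n'.+1 => {fraction {poly ratfun F n'}}
  end.

Definition ratfun_emb (F : fieldType) (n : nat) (x : ratfun F n) : ratfun F n.+1 :=
  @FracField.tofrac _ (x%:P).

Fixpoint indet (F : fieldType) (n : nat) (i : nat) : ratfun F n :=
  match n return ratfun F n with
  | 0 => 0
  | n'.+1 => if i == n' then @FracField.tofrac _ 'X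
             else ratfun_emb (indet F n' i)
  end.

(* A digraph with vertex set 'I_nV, edge set 'I_nE, tail t and head h.
   Twisted coboundary d = d_h - d_t of the twisted structure sheaf, as a
   matrix acting on row vectors (u |-> u *m d) indexed by edges (rows) and
   vertices (columns), over F(psi), psi(e) = indet e. *)
Definition twisted_d (F : fieldType) (nV nE : nat) (t h : 'I_nE -> 'I_nV)
  : 'M[ratfun F nE]_(nE, nV) :=
  \matrix_(e < nE, v < nV)
     ((h e == v)%:R - indet F nE e * (t e == v)%:R).

Definition h1_twist_struct (F : fieldType) (nV nE : nat) (t h : 'I_nE -> 'I_nV)
  : nat := \rank (kermx (twisted_d F t h)).

Definition uadj (nV nE : nat) (t h : 'I_nE -> 'I_nV) : rel 'I_nV :=
  fun x y => [exists e, ((t e == x) && (h e == y)) || ((t e == y) && (h e == x))].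

Definition components (nV nE : nat) (t h : 'I_nE -> 'I_nV) : {set {set 'I_nV}} :=
  [set [set y | connect (uadj t h) x y] | x in [set: 'I_nV]].

Definition h1_comp (nV nE : nat) (t h : 'I_nE -> 'I_nV) (X : {set 'I_nV}) : int :=
  (#|[set e | t e \in X]|%:Z - #|X|%:Z + 1)%R.

Definition rho (nV nE : nat) (t h : 'I_nE -> 'I_nV) : int :=
  \sum_(X in components t h) Num.max 0 (h1_comp t h X - 1).

From HB Require Import structures.
From mathcomp Require Import all_boot all_order all_algebra.
Set Implicit Arguments. Unset Strict Implicit. Unset Printing Implicit Defensive.
Import Order.TTheory GRing.Theory Num.Theory.
Local Open Scope ring_scope.

(** The coboundary [d] splits into blocks, one for each connected component
    [X], with [|E_X|] rows and [|V_X|] columns, so it suffices to show that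
    such a block has full rank [min(|E_X|, |V_X|)]; then
    [h_1^twist = sum_X (|E_X| - min(|E_X|, |V_X|)) = sum_X max(0, h_1(X) - 1)].
    Since the row of an edge [e] is [e_(h e) - psi(e) e_(t e)] with
    [psi(e) <> 0], a unit vector [e_v] lies in the row space of [d] either for
    every vertex of [X] or for none.  In the first case the block has rank
    [|V_X|].  In the second, adjoining the edges one at a time, each new row
    involves a fresh indeterminate [psi(e)] and thus cannot lie in the span
    of the previous rows, which are defined over [F(psi(e') | e' < e)]:
    otherwise [e_(t e)] would already lie in that span.  So the block has
    rank [|E_X|]. *)

Section DiagSet.
Variable R : fieldType.

Definition diag_set n (S : {set 'I_n}) : 'M[R]_n := diag_mx (\row_j (j \in S)%:R).

Lemma diag_setT n : diag_set [set: 'I_n] = 1%:M.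
Proof. by apply/matrixP => i j; rewrite !mxE inE. Qed.

Lemma diag_set0 n : diag_set (set0 : {set 'I_n}) = 0.
Proof. by apply/matrixP => i j; rewrite !mxE inE mul0rn. Qed.

Lemma mul_diag_set n (S S' : {set 'I_n}) :
  diag_set S *m diag_set S' = diag_set (S :&: S').
Proof.
by rewrite mulmx_diag; congr diag_mx; apply/rowP => j; rewrite !mxE inE -natrM mulnb.
Qed.

Lemma diag_setU n (S S' : {set 'I_n}) : [disjoint S & S'] ->
  diag_set (S :|: S') = diag_set S + diag_set S'.
Proof.
move=> dS; rewrite -raddfD /=; congr diag_mx; apply/rowP => j.
rewrite !mxE inE -natrD; case: (boolP (j \in S)) => [jS|_] //.
by rewrite (disjointFr dS jS).
Qed.

Lemma mxrank_sum_le (I : finType) (P : pred I) m n (G : I -> 'M[R]_(m, n)) :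
  (\rank (\sum_(i | P i) G i)%R <= \sum_(i | P i) \rank (G i))%N.
Proof.
apply: (big_rec2 (fun a (B : 'M[R]_(m, n)) => \rank B <= a)%N).
  by rewrite mxrank0.
by move=> i a B _ IH; rewrite (leq_trans (mxrank_add _ _)) // leq_add2l.
Qed.

Lemma mxrank_diag_set_le n (S : {set 'I_n}) : (\rank (diag_set S) <= #|S|)%N.
Proof.
rewrite /diag_set diag_mx_sum_delta (leq_trans (mxrank_sum_le _ _)) //.
rewrite -sum1_card [X in (_ <= X)%N]big_mkcond leq_sum // => i _; rewrite mxE.
by case: (i \in S); rewrite ?scale1r ?scale0r ?mxrank_delta ?mxrank0.
Qed.

Lemma mxrank_diag_set n (S : {set 'I_n}) : \rank (diag_set S) = #|S|.
Proof.
apply/eqP; rewrite eqn_leq mxrank_diag_set_le /=.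
have rank_sum := mxrank_add (diag_set S) (diag_set (~: S)).
rewrite -diag_setU ?disjoints_subset ?setCK // setUCr diag_setT mxrank1 in rank_sum.
have := mxrank_diag_set_le (~: S); rewrite cardsCs setCK card_ord => rankC.
rewrite -(leq_add2r (n - #|S|)) subnKC ?(leq_trans rank_sum) ?leq_add2l //.
by rewrite (leq_trans (max_card _)) // card_ord.
Qed.

End DiagSet.

Arguments diag_set {R n}.

Section FreshIndeterminate.
Variable K : fieldType.
Local Notation X := (@FracField.tofrac {poly K} 'X).

Definition tofracC : {rmorphism K -> {fraction {poly K}}} :=
  (@FracField.tofrac {poly K} \o polyC)%FUN.

Lemma tofracC_subX_eq0 (x y : K) : tofracC x - X * tofracC y = 0 -> y = 0.
Proof.
rewrite /= -rmorphM -rmorphB => /eqP; rewrite tofrac_eq0 => /eqP/(congr1 (coefp 1)).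
by rewrite /= coefB coefC coefXM coefC coef0 sub0r => /eqP; rewrite oppr_eq0 => /eqP.
Qed.

Lemma submx_map_subX m n (M : 'M[K]_(m, n)) (u v : 'rV[K]_n) :
  (map_mx tofracC u - X *: map_mx tofracC v <= map_mx tofracC M)%MS -> (v <= M)%MS.
Proof.
rewrite !submxE -map_cokermx mulmxBl -scalemxAl -!map_mxM => /eqP/rowP coker0.
by apply/eqP/rowP => j; have := coker0 j; rewrite !mxE => /tofracC_subX_eq0.
Qed.

End FreshIndeterminate.

Arguments tofracC {K}.

Section Indeterminates.
Variable F : fieldType.

Lemma indetS n i : (i < n)%N -> indet F n.+1 i = tofracC (indet F n i).
Proof. by move=> lt_in; rewrite /= ifN // neq_ltn lt_in. Qed.

Lemma indet_last n : indet F n.+1 n = FracField.tofrac 'X.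
Proof. by rewrite /= eqxx. Qed.

Lemma indet_neq0 n i : (i < n)%N -> indet F n i != 0.
Proof.
elim: n => [//|n IH] lt_in /=; case: ifP => [_|/negbT ne_in].
  by rewrite tofrac_eq0 polyX_eq0.
change (tofracC (indet F n i) != 0).
by rewrite fmorph_eq0 IH // -ltnS ltn_neqAle ne_in.
Qed.

End Indeterminates.

Section TwistedCoboundary.
Variables (F : fieldType) (nV : nat).

Definition twisted_d_on nE (t h : 'I_nE -> 'I_nV) (A : {set 'I_nE}) :
  'M[ratfun F nE]_(nE, nV) := diag_set A *m twisted_d F t h.

Definition free_tail_edges nE (t h : 'I_nE -> 'I_nV) (A : {set 'I_nE}) :
  {set 'I_nE} := [set e in A | ~~ (('e_(t e) : 'rV_nV) <= twisted_d_on t h A)%MS].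

Lemma row_twisted_d nE (t h : 'I_nE -> 'I_nV) e :
  row e (twisted_d F t h) = 'e_(h e) - indet F nE e *: 'e_(t e).
Proof. by apply/rowP => v; rewrite !mxE !(eq_sym v). Qed.

Lemma row_twisted_d_on nE (t h : 'I_nE -> 'I_nV) A e :
  row e (twisted_d_on t h A) = (e \in A)%:R *: row e (twisted_d F t h).
Proof. by rewrite row_mul row_diag_mx -scalemxAl -rowE mxE. Qed.

Section LastEdge.
Variables (n : nat) (t h : 'I_n.+1 -> 'I_nV) (A : {set 'I_n.+1}).
Local Notation w := (lift ord_max).
Local Notation D := (twisted_d_on t h A).
Local Notation D' := (twisted_d_on (t \o w) (h \o w) (w @^-1: A)).

Lemma row_map_twisted_d_on_restr i : row i (map_mx tofracC D') = row (w i) D.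
Proof.
rewrite -map_row !row_twisted_d_on !row_twisted_d inE.
apply/rowP => v; rewrite !mxE rmorphM rmorphB rmorphM !rmorph_nat.
by rewrite lift_max -indetS.
Qed.

Lemma map_twisted_d_on_restr_sub : (map_mx tofracC D' <= D)%MS.
Proof. by apply/row_subP => i; rewrite row_map_twisted_d_on_restr row_sub. Qed.

Lemma row_twisted_d_on_last : ord_max \in A ->
  row ord_max D = 'e_(h ord_max) - FracField.tofrac 'X *: 'e_(t ord_max).
Proof. by move=> lA; rewrite row_twisted_d_on lA scale1r row_twisted_d indet_last. Qed.

Lemma unit_submx_map_twisted_d_on_restr v :
  (('e_v : 'rV_nV) <= D')%MS -> (('e_v : 'rV_nV) <= map_mx tofracC D')%MS.
Proof. by rewrite -(map_submx tofracC) map_delta_mx. Qed.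

Lemma card_free_tail_edges_restr :
  (#|free_tail_edges t h A| <=
   (ord_max \in free_tail_edges t h A) +
   #|free_tail_edges (t \o w) (h \o w) (w @^-1: A)|)%N.
Proof.
rewrite (cardsD1 ord_max) leq_add2l.
rewrite -[X in (_ <= X)%N](card_imset _ (@lift_inj _ ord_max)).
apply: subset_leq_card; apply/subsetP => e.
rewrite !inE eq_sym => /andP[/unlift_some[j -> _] /andP[eA eD]].
apply: imset_f; rewrite !inE eA /=.
apply: contra eD => /unit_submx_map_twisted_d_on_restr sub.
exact: submx_trans sub map_twisted_d_on_restr_sub.
Qed.

Lemma rank_twisted_d_on_restr_lt : ord_max \in free_tail_edges t h A ->
  (\rank D' < \rank D)%N.
Proof.
rewrite inE => /andP[lA /negP tail_free].
have new_row : ~~ (row ord_max D <= map_mx tofracC D')%MS.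
  apply/negP => sub_row; apply: tail_free.
  have sub_tail : (('e_(t ord_max) : 'rV_nV) <= D')%MS.
    apply: (@submx_map_subX _ _ _ _ 'e_(h ord_max)).
    by rewrite !map_delta_mx -row_twisted_d_on_last.
  apply: submx_trans (unit_submx_map_twisted_d_on_restr sub_tail) _.
  exact: map_twisted_d_on_restr_sub.
have lt_row : (map_mx tofracC D' < map_mx tofracC D' + row ord_max D)%MS.
  by rewrite ltmxE addsmxSl addsmx_sub submx_refl.
rewrite -(mxrank_map tofracC) (leq_trans (rank_ltmx lt_row)) // mxrankS //.
by rewrite addsmx_sub map_twisted_d_on_restr_sub row_sub.
Qed.

End LastEdge.

Lemma card_free_tail_edges_le nE (t h : 'I_nE -> 'I_nV) (A : {set 'I_nE}) :
  (#|free_tail_edges t h A| <= \rank (twisted_d_on t h A))%N.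
Proof.
elim: nE t h A => [|n IH] t h A; first by rewrite (leq_trans (max_card _)) ?card_ord.
apply: leq_trans (card_free_tail_edges_restr t h A) _.
have IHr := IH (t \o lift ord_max) (h \o lift ord_max) (lift ord_max @^-1: A).
case: (boolP (ord_max \in _)) => [/rank_twisted_d_on_restr_lt lt_rank|_].
  by rewrite add1n (leq_ltn_trans IHr lt_rank).
rewrite add0n (leq_trans IHr) // -(mxrank_map tofracC) mxrankS //.
exact: map_twisted_d_on_restr_sub.
Qed.

End TwistedCoboundary.

Section AdditiveOnCover.
Variables (T : finType) (C : {set T} -> Prop) (g : {set T} -> nat).
Hypothesis C_cover : forall P : {set {set T}}, {in P, forall X, C X} -> C (cover P).
Hypothesis g_set0 : g set0 = 0%N.
Hypothesis g_setU : forall X Y, C X -> C Y -> [disjoint X & Y] ->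
  g (X :|: Y) = (g X + g Y)%N.

Lemma additive_cover (P : {set {set T}}) : trivIset P -> {in P, forall X, C X} ->
  g (cover P) = (\sum_(X in P) g X)%N.
Proof.
elim: {P}#|P| {-2}P (erefl #|P|) => [|n IH] P card_P triv_P C_P.
  by move/eqP: card_P; rewrite cards_eq0 => /eqP->; rewrite /cover !big_set0.
have /card_gt0P[X0 X0P] : (0 < #|P|)%N by rewrite card_P.
have sub_P : P :\ X0 \subset P := subsetDl _ _.
have C_P' : {in P :\ X0, forall X, C X} by move=> X /(subsetP sub_P); apply: C_P.
have disj : [disjoint X0 & cover (P :\ X0)].
  apply: bigcup_disjoint => X; rewrite !inE => /andP[neX XP].
  by move/trivIsetP: triv_P; apply => //; rewrite eq_sym.
rewrite /cover (big_setD1 X0) //= [RHS](big_setD1 X0) //=.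
rewrite (g_setU (C_P _ X0P) (C_cover C_P') disj); congr (_ + _)%N; apply: IH => //.
- by move: card_P; rewrite (cardsD1 X0) X0P => -[].
- exact: trivIsetS sub_P triv_P.
Qed.

End AdditiveOnCover.

Section Components.
Variables (F : fieldType) (nV nE : nat) (t h : 'I_nE -> 'I_nV).
Local Notation d := (twisted_d F t h).
Local Notation D := (twisted_d_on F t h).
Implicit Types (X Y Z : {set 'I_nV}) (A B : {set 'I_nE}).

Definition tail_edges (X : {set 'I_nV}) : {set 'I_nE} := t @^-1: X.
Definition edge_closed (X : {set 'I_nV}) := forall e, (t e \in X) = (h e \in X).
Definition comp (x : 'I_nV) : {set 'I_nV} := [set y | connect (uadj t h) x y].
Definition spanned (v : 'I_nV) := (('e_v : 'rV_nV) <= d)%MS.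

Lemma twisted_d_on_sub A B : A \subset B -> D A = diag_set A *m D B.
Proof. by move=> AB; rewrite /twisted_d_on mulmxA mul_diag_set (setIidPl AB). Qed.

Lemma twisted_d_on_closed X : edge_closed X -> D (tail_edges X) = d *m diag_set X.
Proof.
move=> cX; apply/matrixP => i j.
rewrite /twisted_d_on /diag_set mul_diag_mx mul_mx_diag !mxE inE.
rewrite mulrBr mulrBl; congr (_ - _).
  by case: (h i =P j) => [<-|_]; rewrite ?mulr0 ?mul0r ?mulr1 ?mul1r ?cX.
by case: (t i =P j) => [<-|_]; rewrite ?mulr0 ?mul0r ?mulr1 ?mul1r // mulrC.
Qed.

Lemma submx_mul_diag_set m (C : 'M_(m, nV)) X : edge_closed X ->
  (C <= D (tail_edges X))%MS -> C *m diag_set X = C.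
Proof.
move=> cX; rewrite twisted_d_on_closed // => /submxP[W ->].
by rewrite -!mulmxA mul_diag_set setIid.
Qed.

Lemma rank_twisted_d_on_le A : (\rank (D A) <= #|A|)%N.
Proof. by rewrite (leq_trans (mxrankM_maxl _ _)) // mxrank_diag_set. Qed.

Lemma rank_twisted_d_on_closed_le X : edge_closed X ->
  (\rank (D (tail_edges X)) <= minn #|tail_edges X| #|X|)%N.
Proof.
move=> cX; rewrite leq_min rank_twisted_d_on_le /=.
by rewrite twisted_d_on_closed // (leq_trans (mxrankM_maxr _ _)) // mxrank_diag_set.
Qed.

Lemma spanned_tail_head e : spanned (t e) = spanned (h e).
Proof.
have psi_neq0 : indet F nE e != 0 by apply: indet_neq0.
have row_e := row_twisted_d F t h e.
rewrite /spanned; apply/idP/idP => sub.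
  have -> : 'e_(h e) = row e d + indet F nE e *: 'e_(t e) by rewrite row_e subrK.
  by rewrite addmx_sub ?row_sub // scalemx_sub.
have -> : 'e_(t e) = (indet F nE e)^-1 *: ('e_(h e) - row e d).
  by rewrite row_e opprB addrC subrK scalerA mulVf ?scale1r.
by rewrite scalemx_sub // addmx_sub // eqmx_opp row_sub.
Qed.

Lemma spanned_connect x y : connect (uadj t h) x y -> spanned x = spanned y.
Proof.
move=> xy; apply: (@closed_connect _ _ [pred v | spanned v]) xy => u v.
by case/existsP=> e /orP[]/andP[/eqP<- /eqP<-]; rewrite !inE spanned_tail_head.
Qed.

Lemma comp_closed x : edge_closed (comp x).
Proof.
move=> e; rewrite !inE; apply/idP/idP => xe; apply: (connect_trans xe); apply: connect1;
  by apply/existsP; exists e; rewrite !eqxx ?orbT.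
Qed.

Lemma rank_twisted_d_on_comp x :
  \rank (D (tail_edges (comp x))) = minn #|tail_edges (comp x)| #|comp x|.
Proof.
have cX := comp_closed x.
apply/eqP; rewrite eqn_leq rank_twisted_d_on_closed_le //=.
have [sx | nsx] := boolP (spanned x).
  rewrite (leq_trans (geq_minr _ _)) // -(mxrank_diag_set (ratfun F nE)) mxrankS //.
  rewrite twisted_d_on_closed //; apply/row_subP => i; rewrite rowE.
  have [iX | niX] := boolP (i \in comp x).
    have xi : connect (uadj t h) x i by rewrite inE in iX.
    by apply: submxMr; rewrite -[(_ <= d)%MS]/(spanned i) -(spanned_connect xi).
  by rewrite -rowE row_diag_mx mxE (negbTE niX) scale0r sub0mx.
have free_all : free_tail_edges F t h (tail_edges (comp x)) = tail_edges (comp x).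
  apply/setP => e; rewrite !inE andb_idr // => xe; apply: contra nsx => sub.
  by rewrite (spanned_connect xe); apply: submx_trans sub (submxMl _ _).
by rewrite (leq_trans (geq_minl _ _)) // -{1}free_all card_free_tail_edges_le.
Qed.

Lemma edge_closed_cover (P : {set {set 'I_nV}}) :
  {in P, forall X, edge_closed X} -> edge_closed (cover P).
Proof.
move=> cP e; apply/bigcupP/bigcupP => -[X XP eX]; exists X => //;
  by rewrite ?(cP _ XP) // -(cP _ XP).
Qed.

Lemma card_tail_edgesU X Y : [disjoint X & Y] ->
  #|tail_edges (X :|: Y)| = (#|tail_edges X| + #|tail_edges Y|)%N.
Proof.
move=> dXY; rewrite /tail_edges preimsetU cardsU -preimsetI.
by rewrite disjoint_setI0 // preimset0 cards0 subn0.
Qed.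

Lemma rank_twisted_d_on_tail_edgesU X Y :
  edge_closed X -> edge_closed Y -> [disjoint X & Y] ->
  \rank (D (tail_edges (X :|: Y))) =
    (\rank (D (tail_edges X)) + \rank (D (tail_edges Y)))%N.
Proof.
move=> cX cY dXY; have cXY : edge_closed (X :|: Y) by move=> e; rewrite !inE cX cY.
have D_U : D (tail_edges (X :|: Y)) = D (tail_edges X) + D (tail_edges Y).
  by rewrite !twisted_d_on_closed // diag_setU // mulmxDr.
have sub_tail Z : Z \subset X :|: Y -> tail_edges Z \subset tail_edges (X :|: Y).
  exact: preimsetS.
rewrite -mxrank_disjoint_sum.
  apply: eqmx_rank; apply/andP; split; first by rewrite D_U addmx_sub_adds.
  rewrite addsmx_sub (twisted_d_on_sub (sub_tail X (subsetUl X Y))).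
  by rewrite (twisted_d_on_sub (sub_tail Y (subsetUr X Y))) !submxMl.
rewrite -(submx_mul_diag_set cX (capmxSl _ _)) -(submx_mul_diag_set cY (capmxSr _ _)).
by rewrite -mulmxA mul_diag_set setIC disjoint_setI0 // diag_set0 mulmx0.
Qed.

Lemma uadj_sym : symmetric (uadj t h).
Proof. by move=> x y; apply: eq_existsb => e; rewrite orbC. Qed.

Lemma components_partition : partition (components t h) setT.
Proof.
have -> : components t h = equivalence_partition (connect (uadj t h)) setT.
  by apply: eq_imset => x; apply/setP => y; rewrite !inE.
apply: equivalence_partitionP => x y z _ _ _; split; first exact: connect0.
move=> xy; apply/idP/idP; last exact: connect_trans.
by apply: connect_trans; rewrite (sym_connect_sym uadj_sym).
Qed.

Lemma components_closed : {in components t h, forall X, edge_closed X}.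
Proof. by move=> X /imsetP[x _ ->]; apply: comp_closed. Qed.

Lemma additive_components (g : {set 'I_nV} -> nat) : g set0 = 0%N ->
  (forall X Y, edge_closed X -> edge_closed Y -> [disjoint X & Y] ->
     g (X :|: Y) = (g X + g Y)%N) ->
  g setT = (\sum_(X in components t h) g X)%N.
Proof.
move=> g0 gU; have part := components_partition.
rewrite -(cover_partition part); apply: (additive_cover (C := edge_closed)) => //.
- exact: edge_closed_cover.
- by case/and3P: part.
- exact: components_closed.
Qed.

Lemma sum_card_tail_edges : (\sum_(X in components t h) #|tail_edges X|)%N = nE.
Proof.
rewrite -(additive_components (g := fun X => #|tail_edges X|)) => [||X Y _ _].
- by rewrite /tail_edges preimsetT cardsT card_ord.
- by rewrite /tail_edges preimset0 cards0.
- exact: card_tail_edgesU.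
Qed.

Lemma rank_twisted_d_sum :
  \rank d = (\sum_(X in components t h) \rank (D (tail_edges X)))%N.
Proof.
rewrite -(additive_components (g := fun X => \rank (D (tail_edges X)))).
- by rewrite /twisted_d_on /tail_edges preimsetT diag_setT mul1mx.
- by rewrite /twisted_d_on /tail_edges preimset0 diag_set0 mul0mx mxrank0.
- exact: rank_twisted_d_on_tail_edgesU.
Qed.

End Components.

Lemma max0_subz_minn (a b : nat) : Num.max 0 (a%:Z - b%:Z) = (a - minn a b)%N.
Proof.
case: (leqP a b) => ab; first by rewrite subnn max_l // subr_le0 lez_nat.
by rewrite max_r ?subzn ?subr_ge0 ?lez_nat // ltnW.
Qed.

Lemma h1_comp_component (F : fieldType) nV nE (t h : 'I_nE -> 'I_nV) X :
  X \in components t h -> Num.max 0 (h1_comp t h X - 1) =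
    (#|tail_edges t X| - \rank (twisted_d_on F t h (tail_edges t X)))%N.
Proof.
case/imsetP=> x _ ->; rewrite -/(comp t h x) rank_twisted_d_on_comp /h1_comp addrK.
exact: max0_subz_minn.
Qed.

Theorem mainTheorem10 (F : fieldType) (nV nE : nat) (t h : 'I_nE -> 'I_nV) :
  rho t h = (h1_twist_struct F t h)%:Z.
Proof.
rewrite /rho /h1_twist_struct mxrank_ker (rank_twisted_d_sum F).
transitivity (\sum_(X in components t h)
  (#|tail_edges t X| - \rank (twisted_d_on F t h (tail_edges t X)))%N%:Z).
  by apply: eq_bigr => X XP; rewrite (h1_comp_component F XP).
rewrite -(big_morph Posz PoszD (erefl _)) sumnB ?sum_card_tail_edges // => X _.
exact: rank_twisted_d_on_le.
Qed.
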